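(* Let $X$ be a non-empty set, $R$ a binary relation on $X$, and $\tau$ a compact topology on $X$ such that $R$ is upper tc-semicontinuous with respect to $\tau$. Let $\mu(\Xi,\widetilde{R})=\{X^*_i : i\in I\}$ be the family of $\widetilde{R}$-maximal strong components of $(X,R)$. Then a set $W\subseteq X$ is a $w$-stable set of $(X,R)$ if and only if there exist $J\subseteq I$ and, for each $j\in J$, an element $x_j\in X^*_j$ such that $W=\{x_j : j\in J\}$ (i.e. $W$ is contained in the union of the $\widetilde{R}$-maximal components and contains at most one alternative from each of them).
   Context: For a binary relation $R$ on $X$, the transitive closure $\overline{R}$ is defined by: $x\overline{R}y$ iff there exist $K\ge 1$ and $x_0,\dots,x_K\in X$ with $x_0=x$, $x_K=y$, and $x_{k-1}Rx_k$ for all $k\in\{1,\dots,K\}$. A set $F\subseteq X$ is a $w$-stable set of $(X,R)$ if (i) (internal stability) for all distinct $x,y\in F$, $(x,y)\notin\overline{R}$; and (ii) (external stability) for all $x\in F$ and $y\in X\setminus F$, if $y\overline{R}x$ then $x\overline{R}y$. $R$ is upper tc-semicontinuous with respect to $\tau$ if for every $x\in X$ the set $\{y\in X: x\overline{R}y\}$ is open in $\tau$. A topology is compact if every open cover of $X$ has a finite subcover. Strong components: define the equivalence relation $x\sim y$ iff $x=y$ or ($x\overline{R}y$ and $y\overline{R}x$). The ground sets of the strong components of $(X,R)$ are the equivalence classes of $\sim$ (so an element lying on no cycle forms a singleton component); they partition $X$. Let $\Xi$ be the set of these classes. The contraction of $(X,R)$ is $(\Xi,\widetilde{R})$, where for $A,B\in\Xi$,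 $A\widetilde{R}B$ iff there exist $x\in A$, $y\in B$ with $xRy$. A class $A\in\Xi$ is $\widetilde{R}$-maximal if there is no $B\in\Xi$ with $B\ne A$ and $B\widetilde{R}A$. $\mu(\Xi,\widetilde{R})$ denotes the family of $\widetilde{R}$-maximal classes in $\Xi$. *)

From HB Require Import structures.
From mathcomp Require Import all_boot all_order.
From mathcomp Require Import all_classical topology.
Set Implicit Arguments. Unset Strict Implicit. Unset Printing Implicit Defensive.
Local Open Scope classical_set_scope.

Definition tc {T : Type} (R : T -> T -> Prop) (x y : T) : Prop :=
  exists (K : nat) (s : nat -> T),
    (1 <= K)%N /\ s 0%N = x /\ s K = y /\
    (forall k : nat, (1 <= k)%N -> (k <= K)%N -> R (s k.-1) (s k)).

Definition w_stable {T : Type} (R : T -> T -> Prop) (F : set T) : Prop :=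
  (forall x y, F x -> F y -> x <> y -> ~ tc R x y) /\
  (forall x y, F x -> ~ F y -> tc R y x -> tc R x y).

Definition upper_tc_semicontinuous {T : topologicalType} (R : T -> T -> Prop) : Prop :=
  forall x : T, open [set y | tc R x y].

Definition scomp_equiv {T : Type} (R : T -> T -> Prop) (x y : T) : Prop :=
  x = y \/ (tc R x y /\ tc R y x).

Definition strong_component {T : Type} (R : T -> T -> Prop) (A : set T) : Prop :=
  exists x : T, A = [set y | scomp_equiv R x y].

Definition contraction_rel {T : Type} (R : T -> T -> Prop) (A B : set T) : Prop :=
  exists x y, A x /\ B y /\ R x y.

Definition maximal_component {T : Type} (R : T -> T -> Prop) (A : set T) : Prop :=
  strong_component R A /\
  forall B, strong_component R B -> B <> A -> ~ contraction_rel R B A.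

From HB Require Import structures.
From mathcomp Require Import all_boot all_order.
From mathcomp Require Import all_classical topology.
From mathcomp Require Import zify.
Set Implicit Arguments. Unset Strict Implicit.
Local Open Scope classical_set_scope.

(* The set of predecessors (under the transitive closure) of an element of a
   maximal strong component stays inside that component.  Hence in a
   transversal of maximal components no element reaches another one, and
   every element reaching one of them lies in its component and is therefore
   reached back: the transversal is w-stable.  Conversely, external stability
   makes the component of each element of a w-stable set maximal, and
   internal stability allows only one element per component. *)

Section StrongComponents.
Variables (T : Type) (R : T -> T -> Prop).

Local Notation cls x := [set y | scomp_equiv R x y].

Lemma tc_step x y : R x y -> tc R x y.
Proof.
move=> Rxy; exists 1%N, (fun k => if k == 0%N then x else y).
do 3!split=> //.
by move=> k k_ge1 k_le1; have -> : k = 1%N by lia.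
Qed.

Lemma tc_trans x y z : tc R x y -> tc R y z -> tc R x z.
Proof.
move=> [K1 [s1 [K1_ge1 [s10 [s1K1 s1R]]]]] [K2 [s2 [K2_ge1 [s20 [s2K2 s2R]]]]].
exists (K1 + K2)%N, (fun k => if (k <= K1)%N then s1 k else s2 (k - K1)%N).
split; first lia; split; first by rewrite leq0n.
split.
  by rewrite ifF; [have -> : (K1 + K2 - K1)%N = K2 by lia | apply/negbTE; lia].
move=> k k_ge1 k_le.
have [kK1|K1k] := leqP k K1; first by rewrite ifT; [apply: s1R | lia].
have [k1K1|K1k1] := leqP k.-1 K1.
  have -> : k.-1 = K1 by lia.
  have -> : (k - K1)%N = 1%N by lia.
  by rewrite s1K1 -s20; exact: (s2R 1%N).
have -> : (k.-1 - K1)%N = (k - K1).-1 by lia.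
by apply: s2R; lia.
Qed.

Lemma tc_backward_closed (P : set T) :
  (forall y z, R y z -> P z -> P y) -> forall y z, tc R y z -> P z -> P y.
Proof.
move=> Pback y z [K [s [_ [s0 [sK sR]]]]] Pz.
suff Ps : forall n, (n <= K)%N -> P (s (K - n)%N).
  by have := Ps K (leqnn K); rewrite subnn s0.
elim=> [|n IHn] n_le; first by rewrite subn0 sK.
have -> : (K - n.+1)%N = (K - n).-1 by lia.
by apply: Pback (IHn (ltnW n_le)); apply: sR; lia.
Qed.

Lemma scomp_equiv_sym x y : scomp_equiv R x y -> scomp_equiv R y x.
Proof. by case=> [->|[]]; [left | right]. Qed.

Lemma scomp_equiv_trans x y z :
  scomp_equiv R x y -> scomp_equiv R y z -> scomp_equiv R x z.
Proof.
case=> [->//|[xy yx]] [<-|[yz zy]]; first by right.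
by right; split; apply: tc_trans; eassumption.
Qed.

Lemma scomp_class_eq x y : scomp_equiv R x y -> cls x = cls y.
Proof.
move=> xy; apply/seteqP; split=> z /=.
  exact/scomp_equiv_trans/scomp_equiv_sym.
exact: scomp_equiv_trans.
Qed.

Lemma strong_componentE A x : strong_component R A -> A x -> A = cls x.
Proof. by move=> [a ->]; apply: scomp_class_eq. Qed.

Lemma maximal_component_pred A y z :
  maximal_component R A -> R y z -> A z -> A y.
Proof.
move=> [_ Amax] Ryz Az.
have [<-|clsyA] := pselect (cls y = A); first by left.
exfalso; apply: (Amax _ _ clsyA); first by exists y.
by exists y, z; split; [left | split].
Qed.

Lemma maximal_component_tc A y z :
  maximal_component R A -> tc R y z -> A z -> A y.
Proof. by move=> Amax; apply: tc_backward_closed => ? ?; apply: maximal_component_pred. Qed.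

Lemma maximal_component_scomp A x y :
  maximal_component R A -> A x -> tc R y x -> scomp_equiv R x y.
Proof.
move=> Amax Ax yx; have := maximal_component_tc Amax yx Ax.
by rewrite (strong_componentE Amax.1 Ax).
Qed.

Lemma w_stable_tc_eq W x y : w_stable R W -> W x -> W y -> tc R x y -> x = y.
Proof. by move=> [Wint _] Wx Wy xy; apply: contrapT => x_neq_y; apply: Wint xy. Qed.

Lemma w_stable_maximal_class W x :
  w_stable R W -> W x -> maximal_component R (cls x).
Proof.
move=> Wst Wx; split; first by exists x.
move=> B Bcomp B_neq [b [a [Bb [xa Rba]]]].
have bx : tc R b x.
  case: xa => [->|[_ ax]]; first exact: tc_step.
  exact: tc_trans (tc_step Rba) ax.
suff xb : scomp_equiv R x b.
  by apply: B_neq; rewrite (strong_componentE Bcomp Bb) -(scomp_class_eq xb).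
have [Wb|nWb] := pselect (W b).
  by left; apply/esym/(w_stable_tc_eq Wst Wb Wx).
by right; split=> //; apply: Wst.2.
Qed.

Lemma transversal_w_stable (J : set (set T)) (xj : set T -> T) :
  J `<=` maximal_component R -> (forall A, J A -> A (xj A)) ->
  w_stable R (xj @` J).
Proof.
move=> Jmax xjA; split.
  move=> _ _ [A JA <-] [B JB <-] xjAB xAB; apply: xjAB; congr xj.
  have Amax := Jmax A JA; have Bmax := Jmax B JB.
  rewrite (strong_componentE Amax.1 (xjA A JA)).
  by rewrite (strong_componentE Bmax.1 (maximal_component_tc Bmax xAB (xjA B JB))).
move=> _ y [A JA <-] notWy yx.
have [xy|[xy _]] := maximal_component_scomp (Jmax A JA) (xjA A JA) yx => //.
by exfalso; apply: notWy; exists A.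
Qed.

End StrongComponents.

Lemma w_stable_transversal (T : choiceType) (R : T -> T -> Prop) (x0 : T)
    (W : set T) :
  w_stable R W ->
  exists (J : set (set T)) (xj : set T -> T),
    J `<=` maximal_component R /\
    (forall A, J A -> A (xj A)) /\
    W = xj @` J.
Proof.
move=> Wst.
pose cls x := [set y | scomp_equiv R x y].
pose xj A := xget x0 (W `&` A).
have xjW x : W x -> (W `&` cls x) (xj (cls x)).
  by move=> Wx; apply: xgetPex; exists x; split=> //; left.
exists (cls @` W), xj; split; [|split].
- by move=> _ [x Wx <-]; exact: w_stable_maximal_class Wst Wx.
- by move=> _ [x Wx <-]; have [] := xjW x Wx.
apply/seteqP; split=> [x Wx | _ [_ [x Wx <-] <-]]; last by have [] := xjW x Wx.
exists (cls x); first by exists x.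
have [Wxj [//|[x_xj _]]] := xjW x Wx.
exact/esym/(w_stable_tc_eq Wst Wx Wxj).
Qed.

Theorem theorem2 (T : topologicalType) (R : T -> T -> Prop)
  (hne : [set: T] !=set0)
  (hcpt : compact [set: T])
  (husc : upper_tc_semicontinuous R)
  (W : set T) :
  w_stable R W <->
  exists (J : set (set T)) (xj : set T -> T),
    J `<=` maximal_component R /\
    (forall A, J A -> A (xj A)) /\
    W = xj @` J.
Proof.
split; first by have [x0 _] := hne; apply: w_stable_transversal.
by move=> [J [xj [Jmax [xjA ->]]]]; apply: transversal_w_stable.
Qed.
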